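(* For every $f\in\mathcal H^\infty_w$ one has $G_{\tilde\psi,\psi}C_{\tilde\psi}f=C_{\tilde\psi}f$, i.e. $\sum_{l\in X}\langle\psi_l,\tilde\psi_k\rangle\,\langle f,\tilde\psi_l\rangle_{\overline{\mathcal H},\mathcal H^{00}}=\langle f,\tilde\psi_k\rangle_{\overline{\mathcal H},\mathcal H^{00}}$ for all $k\in X$. In other words, $G_{\tilde\psi,\psi}$ restricted to the range $R(C_{\tilde\psi})$ is the identity of $R(C_{\tilde\psi})$.
   Context: Standing setting. $\mathcal H$ is a separable complex Hilbert space with inner product $\langle\cdot,\cdot\rangle$, linear in the first and conjugate-linear in the second argument. $X$ is a countable index set. A weight is a map $w:X\to(0,\infty)$; $\ell^\infty_w$ is the Banach space of sequences $\alpha=(\alpha_k)_{k\in X}$ with $\|\alpha\|_{\ell^\infty_w}:=\sup_{k\in X}|\alpha_k|w(k)<\infty$. $\psi=(\psi_k)_{k\in X}$ is a frame for $\mathcal H$ and $\tilde\psi=(\tilde\psi_k)_{k\in X}$ is a dual frame, i.e. $f=\sum_{k}\langle f,\tilde\psi_k\rangle\psi_k=\sum_k\langle f,\psi_k\rangle\tilde\psi_k$ for all $f\in\mathcal H$ (unconditional convergence in $\mathcal H$). The cross Gram matrix $G_{\tilde\psi,\psi}$ has entries $(G_{\tilde\psi,\psi})_{k,l}=\langle\psi_l,\tilde\psi_k\rangle$ and acts by $(G_{\tilde\psi,\psi}\alpha)_k=\sum_{l\in X}\langle\psi_l,\tilde\psi_k\rangle\alpha_l$; it is assumed to define a bounded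 operator on $\ell^\infty_w$, meaning these series converge absolutely for every $\alpha\in\ell^\infty_w$ and $G_{\tilde\psi,\psi}:\ell^\infty_w\to\ell^\infty_w$ is bounded (equivalently $\|G_{\tilde\psi,\psi}\|_{\mathcal B(\ell^\infty_w)}=\sup_{k}\sum_{l}|\langle\psi_l,\tilde\psi_k\rangle|\,w(k)/w(l)<\infty$). Let $\mathcal H^{00}:=\operatorname{span}\{\tilde\psi_k:k\in X\}$ (finite linear combinations), a dense subspace of $\mathcal H$. Equip $\mathcal H$ with the locally convex topology $\sigma(\mathcal H,\mathcal H^{00})$ generated by the seminorms $f\mapsto|\langle f,v\rangle|$, $v\in\mathcal H^{00}$ (Hausdorff and metrizable). Let $\overline{\mathcal H}$ be the completion of $\mathcal H$ in this topology, with $\mathcal H\subseteq\overline{\mathcal H}$, and for each $v\in\mathcal H^{00}$ let $f\mapsto\langle f,v\rangle_{\overline{\mathcal H},\mathcal H^{00}}$ be the unique continuous linear extension of $f\mapsto\langle f,v\rangle$ to $\overline{\mathcal H}$. Define $\mathcal H^\infty_w$ as the set of all $f\in\overline{\mathcal H}$ for which there is a sequence $(f_n)_{n\ge1}\subseteq\mathcal H$ converging to $f$ in $\sigma(\overline{\mathcal H},\mathcal H^{00})$ (i.e. $\langle f_n,v\rangle\to\langle f,v\rangle_{\overline{\mathcal H},\mathcal H^{00}}$ for all $v\in\mathcal H^{00}$) with $\sup_{n\in\mathbb N,k\in X}|\langle f_n,\tilde\psi_k\rangle|w(k)<\infty$. The coefficient operator is $C_{\tilde\psi}:\mathcal H^\infty_w\to\ell^\infty_w$,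 $C_{\tilde\psi}f=(\langle f,\tilde\psi_k\rangle_{\overline{\mathcal H},\mathcal H^{00}})_{k\in X}$, and $R(C_{\tilde\psi})$ denotes its range. *)

From mathcomp Require Import all_boot all_order all_algebra.
From mathcomp Require Import reals.
From mathcomp.real_closed Require Import complex.
Set Implicit Arguments. Unset Strict Implicit. Unset Printing Implicit Defensive.
Import Order.TTheory GRing.Theory Num.Theory.
Local Open Scope ring_scope.

Section FrameDefs.
Variable R : realType.
Local Notation C := R[i].

Definition cabs (z : C) : R := Num.sqrt (complex.Re z ^+ 2 + complex.Im z ^+ 2).

Definition cvgC (u : nat -> C) (l : C) : Prop :=
  forall e : R, 0 < e -> exists N : nat, forall n, (N <= n)%N -> cabs (u n - l) < e.
Definition cauchyC (u : nat -> C) : Prop :=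
  forall e : R, 0 < e -> exists N : nat, forall m n, (N <= m)%N -> (N <= n)%N ->
    cabs (u m - u n) < e.

Variable X : countType.

(* unconditional summation over the countable index set X: convergence of the
   net of finite partial sums (finite subsets given as duplicate-free lists) *)
Definition hasSumC (a : X -> C) (s : C) : Prop :=
  forall e : R, 0 < e -> exists F0 : seq X, forall F : seq X, uniq F ->
    {subset F0 <= F} -> cabs (s - \sum_(k <- F) a k) < e.
Definition hasSumR (a : X -> R) (s : R) : Prop :=
  forall e : R, 0 < e -> exists F0 : seq X, forall F : seq X, uniq F ->
    {subset F0 <= F} -> `|s - \sum_(k <- F) a k| < e.
Definition abs_summable (a : X -> C) : Prop :=
  exists M : R, forall F : seq X, uniq F -> \sum_(k <- F) cabs (a k) <= M.

Definition in_linfw (w : X -> R) (al : X -> C) : Prop :=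
  exists M : R, forall k, cabs (al k) * w k <= M.

Variable H : lmodType C.
Variable ip : H -> H -> C.   (* inner product, linear in the first argument *)

Definition nsq (f : H) : R := complex.Re (ip f f).
Definition hnorm (f : H) : R := Num.sqrt (nsq f).

Record inner_product : Prop := {
  ip_linl : forall (a : C) (f g h : H), ip (a *: f + g) h = a * ip f h + ip g h;
  ip_csym : forall f g : H, ip f g = (ip g f)^*;
  ip_pos  : forall f : H, 0 <= ip f f;
  ip_def  : forall f : H, ip f f = 0 -> f = 0 }.

Definition cvgH (u : nat -> H) (l : H) : Prop :=
  forall e : R, 0 < e -> exists N : nat, forall n, (N <= n)%N -> hnorm (u n - l) < e.
Definition cauchyH (u : nat -> H) : Prop :=
  forall e : R, 0 < e -> exists N : nat, forall m n, (N <= m)%N -> (N <= n)%N ->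
    hnorm (u m - u n) < e.

Definition hilbert_space : Prop :=
  [/\ inner_product,
      (forall u : nat -> H, cauchyH u -> exists l, cvgH u l) &
      (exists d : nat -> H, forall (f : H) (e : R), 0 < e -> exists n, hnorm (f - d n) < e)].

Definition hasSumH (a : X -> H) (s : H) : Prop :=
  forall e : R, 0 < e -> exists F0 : seq X, forall F : seq X, uniq F ->
    {subset F0 <= F} -> hnorm (s - \sum_(k <- F) a k) < e.

Definition is_frame (psi : X -> H) : Prop :=
  exists A B : R, 0 < A /\ 0 < B /\
    forall f : H, exists s : R,
      hasSumR (fun k => cabs (ip f (psi k)) ^+ 2) s /\ A * nsq f <= s /\ s <= B * nsq f.

Definition dual_frame (psi psit : X -> H) : Prop :=
  [/\ is_frame psi, is_frame psit &
      forall f : H, hasSumH (fun k => ip f (psit k) *: psi k) f /\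
                    hasSumH (fun k => ip f (psi k) *: psit k) f].

(* cross Gram matrix (G_{psit,psi})_{k,l} = <psi_l, psit_k> *)
Definition gram (psi psit : X -> H) (k l : X) : C := ip (psi l) (psit k).

Definition gram_bounded_linfw (psi psit : X -> H) (w : X -> R) : Prop :=
  (forall al, in_linfw w al -> forall k, abs_summable (fun l => gram psi psit k l * al l)) /\
  exists M : R, forall (al : X -> C) (c : R), (forall k, cabs (al k) * w k <= c) ->
    forall k s, hasSumC (fun l => gram psi psit k l * al l) s -> cabs s * w k <= M * c.

Definition inH00 (psit : X -> H) (v : H) : Prop :=
  exists s : seq (C * X), v = \sum_(p <- s) p.1 *: psit p.2.

(* (Hb, iota, pb) is a completion of H for sigma(H, H^00): Hb carries the
   topology generated by the seminorms x |-> |pb x v|, v in H^00, pb x v being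
   the continuous linear extension <x, v>_{Hb,H^00}; iota : H -> Hb is the
   inclusion. The space is metrizable, so sequential notions suffice. *)
Record sigma_completion (psit : X -> H) (Hb : lmodType C) (iota : H -> Hb)
    (pb : Hb -> H -> C) : Prop := {
  sc_iota_lin : forall (a : C) (f g : H), iota (a *: f + g) = a *: iota f + iota g;
  sc_pb_lin : forall (a : C) (x y : Hb) v, inH00 psit v ->
     pb (a *: x + y) v = a * pb x v + pb y v;
  sc_compat : forall (f : H) v, inH00 psit v -> pb (iota f) v = ip f v;
  sc_hausdorff : forall x y : Hb, (forall v, inH00 psit v -> pb x v = pb y v) -> x = y;
  sc_complete : forall u : nat -> Hb, (forall v, inH00 psit v -> cauchyC (fun n => pb (u n) v)) ->
     exists x : Hb, forall v, inH00 psit v -> cvgC (fun n => pb (u n) v) (pb x v);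
  sc_dense : forall x : Hb, exists u : nat -> H,
     forall v, inH00 psit v -> cvgC (fun n => pb (iota (u n)) v) (pb x v) }.

Definition in_Hinfw (psit : X -> H) (w : X -> R) (Hb : lmodType C) (iota : H -> Hb)
    (pb : Hb -> H -> C) (f : Hb) : Prop :=
  exists u : nat -> H,
    (forall v, inH00 psit v -> cvgC (fun n => ip (u n) v) (pb f v)) /\
    exists M : R, forall n k, cabs (ip (u n) (psit k)) * w k <= M.

Definition coef_op (psit : X -> H) (Hb : lmodType C) (pb : Hb -> H -> C) (f : Hb) : X -> C :=
  fun k => pb f (psit k).

End FrameDefs.

(* For each approximant u_n of f, the dual-frame expansion u_n = sum_l <u_n, psit_l> psi_l,
   paired with psit_k (a bounded functional by the upper frame bound of psit), gives the
   reproducing identity sum_l G_{k,l} <u_n, psit_l> = <u_n, psit_k>. Since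
   |<u_n, psit_l>| <= M / w(l) uniformly in n, the terms are dominated by
   M |G_{k,l}| / w(l), which is summable because G acts on the sequence 1/w of l^infty_w;
   dominated convergence for unconditional sums lets n tend to infinity. *)

From mathcomp Require Import all_boot all_order all_algebra.
From mathcomp Require Import boolp classical_sets reals.
From mathcomp Require Import lra ring.
From mathcomp.real_closed Require Import complex.
Set Implicit Arguments. Unset Strict Implicit.
Import Order.TTheory GRing.Theory Num.Theory.
Local Open Scope complex_scope.
Local Open Scope ring_scope.

Section ComplexModulus.
Variable R : realType.
Implicit Types x y : R[i].

Lemma cabsE x : (cabs x)%:C = `|x|.
Proof. by rewrite normc_def. Qed.

Lemma cabs_ge0 x : 0 <= cabs x.
Proof. by rewrite -ler0c cabsE. Qed.

Lemma cabsD x y : cabs (x + y) <= cabs x + cabs y.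
Proof. by rewrite -lecR rmorphD /= !cabsE ler_normD. Qed.

Lemma cabsM x y : cabs (x * y) = cabs x * cabs y.
Proof. by apply: complexI; rewrite rmorphM /= !cabsE normrM. Qed.

Lemma cabsB x y : cabs (x - y) = cabs (y - x).
Proof. by apply: complexI; rewrite !cabsE distrC. Qed.

Lemma cabs0 : cabs (0 : R[i]) = 0.
Proof. by apply: complexI; rewrite cabsE normr0. Qed.

Lemma cabsR (r : R) : cabs r%:C = `|r|.
Proof. by apply: complexI; rewrite cabsE normc_def /= expr0n addr0 sqrtr_sqr. Qed.

Lemma cabs_sum (I : Type) (s : seq I) (F : I -> R[i]) :
  cabs (\sum_(i <- s) F i) <= \sum_(i <- s) cabs (F i).
Proof.
elim: s => [|a s IH]; first by rewrite !big_nil cabs0.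
by rewrite !big_cons; apply: le_trans (cabsD _ _) _; apply: lerD.
Qed.

Lemma cvgC_mull (u : nat -> R[i]) l c :
  cvgC u l -> cvgC (fun n => c * u n) (c * l).
Proof.
move=> hu e e0; have c0 := cabs_ge0 c.
have e'0 : 0 < e / (cabs c + 1) by apply: divr_gt0 => //; lra.
have [N hN] := hu _ e'0; exists N => n /hN.
rewrite -mulrBr cabsM; set x := cabs _ => hx.
have x0 : 0 <= x by apply: cabs_ge0.
have : x * (cabs c + 1) < e by rewrite -ltr_pdivlMr //; lra.
nra.
Qed.

Lemma cvgC_add (u v : nat -> R[i]) l m :
  cvgC u l -> cvgC v m -> cvgC (fun n => u n + v n) (l + m).
Proof.
move=> hu hv e e0; have e20 : 0 < e / 2 by apply: divr_gt0.
have [N1 hN1] := hu _ e20; have [N2 hN2] := hv _ e20.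
exists (maxn N1 N2) => n; rewrite geq_max => /andP[/hN1 h1 /hN2 h2].
have -> : u n + v n - (l + m) = (u n - l) + (v n - m) by ring.
by apply: le_lt_trans (cabsD _ _) _; lra.
Qed.

Lemma cvgC_sum (I : Type) (s : seq I) (a_ : nat -> I -> R[i]) (a : I -> R[i]) :
  (forall i, cvgC (fun n => a_ n i) (a i)) ->
  cvgC (fun n => \sum_(i <- s) a_ n i) (\sum_(i <- s) a i).
Proof.
move=> ha; elim: s => [|i s IH].
  by move=> e e0; exists 0%N => n _; rewrite !big_nil subrr cabs0.
under eq_fun => n do rewrite big_cons.
by rewrite big_cons; apply: cvgC_add.
Qed.

End ComplexModulus.

Section UnconditionalSums.
Variables (R : realType) (X : countType).

Lemma hasSumR_ge_term (a : X -> R) s k :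
  (forall l, 0 <= a l) -> hasSumR a s -> a k <= s.
Proof.
move=> a0 hs; apply/ler_addgt0Pr => e e0.
have [F0 hF0] := hs e e0.
pose F := undup (k :: F0).
have uF : uniq F by apply: undup_uniq.
have kF : k \in F by rewrite mem_undup inE eqxx.
have sF : {subset F0 <= F} by move=> x xF0; rewrite mem_undup inE xF0 orbT.
have := hF0 F uF sF.
rewrite (bigD1_seq k kF uF) /=.
have : 0 <= \sum_(i <- F | i != k) a i by apply: sumr_ge0.
move=> h1 h2; have := ler_norm ((a k + \sum_(i <- F | i != k) a i) - s).
rewrite distrC; lra.
Qed.

(* Finite sums of a nonnegative family bounded by K are nearly maximised by some F1,
   so every finite sum disjoint from F1 is small. *)
Lemma bounded_sums_tail_small (D : X -> R) K :
  (forall l, 0 <= D l) -> (forall F, uniq F -> \sum_(l <- F) D l <= K) ->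
  forall e, 0 < e -> exists F1 : seq X, forall G, uniq G ->
    (forall x, x \in G -> x \notin F1) -> \sum_(l <- G) D l < e.
Proof.
move=> D0 hK e e0.
pose E : set R := fun r => exists2 F : seq X, uniq F & r = \sum_(l <- F) D l.
have hE : has_sup E.
  split; first by exists 0; exists [::]; rewrite ?big_nil.
  by exists K => _ [F uF ->]; apply: hK.
have [_ [F1 uF1 ->] hF1] := sup_adherent e0 hE.
exists F1 => G uG dG.
have uFG : uniq (F1 ++ G).
  by rewrite cat_uniq uF1 uG andbT; apply/hasPn => x /dG.
have : \sum_(l <- F1 ++ G) D l <= sup E by apply: sup_upper_bound => //; exists (F1 ++ G).
rewrite big_cat /=; lra.
Qed.

Lemma hasSumC_dominated (a_ : nat -> X -> R[i]) (a : X -> R[i]) (L_ : nat -> R[i]) L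
    (D : X -> R) K :
  (forall n, hasSumC (a_ n) (L_ n)) -> cvgC L_ L ->
  (forall l, cvgC (fun n => a_ n l) (a l)) ->
  (forall n l, cabs (a_ n l) <= D l) ->
  (forall F, uniq F -> \sum_(l <- F) D l <= K) ->
  hasSumC a L.
Proof.
move=> hs hL ha hD hK e e0.
have D0 l : 0 <= D l by apply: le_trans (hD 0%N l); apply: cabs_ge0.
have e40 : 0 < e / 4 by apply: divr_gt0.
have [F1 hF1] := bounded_sums_tail_small D0 hK e40.
exists F1 => F uF sF.
have [N1 hN1] := hL _ e40.
have [N2 hN2] := cvgC_sum F ha e40.
pose n := maxn N1 N2.
have hLn : cabs (L - L_ n) < e / 4 by rewrite cabsB; apply/hN1/leq_maxl.
have hFn : cabs (\sum_(l <- F) a_ n l - \sum_(l <- F) a l) < e / 4 by apply/hN2/leq_maxr.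
have [F0 hF0] := hs n _ e40.
pose G := undup [seq x <- F0 | x \notin F].
have uFG : uniq (F ++ G).
  by rewrite cat_uniq uF undup_uniq andbT; apply/hasPn => x; rewrite mem_undup mem_filter => /andP[].
have sFG : {subset F0 <= F ++ G}.
  move=> x xF0; rewrite mem_cat; case: (boolP (x \in F)) => //= xF.
  by rewrite mem_undup mem_filter xF xF0.
have hFG := hF0 _ uFG sFG; rewrite big_cat /= in hFG.
have hG : cabs (\sum_(l <- G) a_ n l) < e / 4.
  apply: le_lt_trans (cabs_sum _ _) _; apply: le_lt_trans (hF1 G (undup_uniq _) _).
    by apply: ler_sum => l _; apply: hD.
  by move=> x; rewrite mem_undup mem_filter => /andP[xF _]; apply: contra xF; apply: sF.
set SF := \sum_(l <- F) a_ n l in hFn hFG; set SG := \sum_(l <- G) a_ n l in hG hFG.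
have -> : L - \sum_(l <- F) a l =
    (L - L_ n) + (L_ n - (SF + SG)) + SG + (SF - \sum_(l <- F) a l) by ring.
set t1 := L - L_ n; set t2 := L_ n - _; set t4 := SF - _.
have := cabsD (t1 + t2 + SG) t4; have := cabsD (t1 + t2) SG; have := cabsD t1 t2.
lra.
Qed.

End UnconditionalSums.

Section InnerProduct.
Variables (R : realType) (H : lmodType R[i]) (ip : H -> H -> R[i]).
Hypothesis Hip : inner_product ip.

Lemma ip0l h : ip 0 h = 0.
Proof.
have := ip_linl Hip 1 0 0 h; rewrite scaler0 addr0 mul1r.
by rewrite -{1}[ip 0 h]addr0 => /addrI <-.
Qed.

Lemma ipDl f g h : ip (f + g) h = ip f h + ip g h.
Proof. by have := ip_linl Hip 1 f g h; rewrite scale1r mul1r. Qed.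

Lemma ipZl a f h : ip (a *: f) h = a * ip f h.
Proof. by have := ip_linl Hip a f 0 h; rewrite addr0 ip0l addr0. Qed.

Lemma ipBl f g h : ip (f - g) h = ip f h - ip g h.
Proof. by rewrite ipDl -scaleN1r ipZl mulN1r. Qed.

Lemma ip_suml (I : Type) (s : seq I) (p : I -> H) h :
  ip (\sum_(i <- s) p i) h = \sum_(i <- s) ip (p i) h.
Proof.
elim: s => [|a s IH]; first by rewrite !big_nil ip0l.
by rewrite !big_cons ipDl IH.
Qed.

Lemma nsqE f : nsq ip f = hnorm ip f ^+ 2.
Proof.
have : 0 <= ip f f := ip_pos Hip f.
by rewrite lecE => /andP[_ nsq0]; rewrite /hnorm sqr_sqrtr.
Qed.

(* B + 1 dominates sqrt B, so no square root of B has to be taken. *)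
Lemma cabs_ip_le (v : H) (B : R) : 0 <= B ->
  (forall g, cabs (ip g v) ^+ 2 <= B * nsq ip g) ->
  forall g, cabs (ip g v) <= (B + 1) * hnorm ip g.
Proof.
move=> B0 hv g; have h0 : 0 <= hnorm ip g by apply: sqrtr_ge0.
rewrite -(@ler_pXn2r _ 2) // ?nnegrE ?cabs_ge0 //; last by apply: mulr_ge0 => //; lra.
apply: le_trans (hv g) _; rewrite nsqE exprMn.
have := sqr_ge0 (hnorm ip g); nra.
Qed.

Variable X : countType.

Lemma hasSumH_ip (a : X -> H) (s v : H) (B : R) : 0 <= B ->
  (forall g, cabs (ip g v) ^+ 2 <= B * nsq ip g) ->
  hasSumH ip a s -> hasSumC (fun l => ip (a l) v) (ip s v).
Proof.
move=> B0 hv hs e e0.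
have e'0 : 0 < e / (B + 1) by apply: divr_gt0 => //; lra.
have [F0 hF0] := hs _ e'0; exists F0 => F uF sF.
have -> : ip s v - \sum_(l <- F) ip (a l) v = ip (s - \sum_(l <- F) a l) v.
  by rewrite ipBl ip_suml.
apply: le_lt_trans (cabs_ip_le B0 hv _) _.
by rewrite mulrC -ltr_pdivlMr //; [apply: hF0 | lra].
Qed.

Lemma frame_coef_bound (psit : X -> H) : is_frame ip psit ->
  exists2 B : R, 0 <= B & forall g k, cabs (ip g (psit k)) ^+ 2 <= B * nsq ip g.
Proof.
move=> [A [B [_ [B0 hf]]]]; exists B => [|g k]; first exact: ltW.
have [s [hs [_ sB]]] := hf g.
apply: le_trans sB; apply: (hasSumR_ge_term k _ hs) => l; apply: sqr_ge0.
Qed.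

Lemma dual_frame_gram_coef (psi psit : X -> H) : dual_frame ip psi psit ->
  forall u k, hasSumC (fun l => gram ip psi psit k l * ip u (psit l)) (ip u (psit k)).
Proof.
move=> [_ fr hdual] u k.
have [B B0 hB] := frame_coef_bound fr.
have := hasSumH_ip B0 (fun g => hB g k) (hdual u).1.
suff -> : (fun l => ip (ip u (psit l) *: psi l) (psit k)) =
          (fun l => gram ip psi psit k l * ip u (psit l)) by [].
by apply: funext => l; rewrite ipZl mulrC.
Qed.

End InnerProduct.

Lemma inH00_psit (R : realType) (X : countType) (H : lmodType R[i]) (psit : X -> H) l :
  inH00 psit (psit l).
Proof. by exists [:: (1, l)]; rewrite big_cons big_nil scale1r addr0. Qed.

Theorem mainTheorem7 (R : realType) (X : countType) (H : lmodType R[i])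
  (ip : H -> H -> R[i]) (psi psit : X -> H) (w : X -> R)
  (Hb : lmodType R[i]) (iota : H -> Hb) (pb : Hb -> H -> R[i]) :
  hilbert_space ip ->
  (forall k, 0 < w k) ->
  dual_frame ip psi psit ->
  gram_bounded_linfw ip psi psit w ->
  sigma_completion ip psit iota pb ->
  forall f : Hb, in_Hinfw ip psit w iota pb f ->
  forall k : X,
    hasSumC (fun l => gram ip psi psit k l * coef_op psit pb f l) (coef_op psit pb f k).
Proof.
move=> [Hip _ _] w_gt0 hdual [gram_abs_summable _] _ f [u [u_cvg [M u_bound]]] k.
pose inv_w l : R[i] := ((w l)^-1)%:C.
have cabs_inv_w l : cabs (inv_w l) = (w l)^-1.
  by rewrite cabsR ger0_norm // invr_ge0 ltW.
have inv_w_linfw : in_linfw w inv_w by exists 1 => l; rewrite cabs_inv_w mulVf ?gt_eqF.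
have [K hK] := gram_abs_summable _ inv_w_linfw k.
have M_ge0 : 0 <= M by apply: le_trans (u_bound 0%N k); rewrite mulr_ge0 ?cabs_ge0 ?ltW.
apply: (hasSumC_dominated (a_ := fun n l => gram ip psi psit k l * ip (u n) (psit l))
  (L_ := fun n => ip (u n) (psit k)) (D := fun l => M * cabs (gram ip psi psit k l * inv_w l))
  (K := M * K)).
- by move=> n; apply: dual_frame_gram_coef.
- exact/u_cvg/inH00_psit.
- by move=> l; apply/cvgC_mull/u_cvg/inH00_psit.
- move=> n l; rewrite !cabsM cabs_inv_w mulrCA ler_wpM2l ?cabs_ge0 //.
  by rewrite ler_pdivlMr.
- by move=> F uF; rewrite -mulr_sumr ler_wpM2l ?hK.
Qed.
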